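(* Consider the no-show model with homogeneous costs in the context. For $p\ge1$, $j\in[N]$, $\rho\ge0$, $\mathbf s\in\mathcal S$, let $\omega'_j(\rho,\mathbf s)=\sup_{\boldsymbol\xi\in\Xi}\{g(\mathbf s,\boldsymbol\xi)-\rho\|\boldsymbol\xi-\widehat{\boldsymbol\xi}^j\|_p^p\}$. Then $$\omega'_j(\rho,\mathbf s)=\sup_{\boldsymbol\lambda\in\Lambda,\ \mathbf y\in\mathcal Y(\boldsymbol\lambda)}\sum_{i=1}^nf_{ij}(\lambda_i,y_i),\qquad f_{ij}(\lambda_i,y_i):=\sup_{u^L_i\lambda_i\le\mu_i\le u^U_i\lambda_i}\{y_i(\mu_i-s_i)-\rho|\mu_i-\widehat\mu^j_i|^p-\rho|\lambda_i-\widehat\lambda^j_i|^p\}.$$ Moreover, without loss of optimality, $(\boldsymbol\lambda,\mathbf y)$ in this supremum may be restricted to satisfy: $y_n\in\{C,-d_0\}$; for each $i\in[n-1]$, $y_i=-d_0$ or $y_i=y_{i+1}+\lambda_{i+1}$; and $y_i\in\mathcal Y_i$ for all $i\in[n]$, where $\mathcal Y_i=\{-d_0+m:m=0,\dots,n-i\}\cup\{C+m:m=0,\dots,n-i\}$.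
   Context: Notation: $[m]=\{1,\dots,m\}$. $n,N\ge1$, $T>0$, $\mathcal S=\{\mathbf s\in\mathbb R^n:\mathbf s\ge0,\sum_is_i\le T\}$. Homogeneous costs: $c_1=\dots=c_n=1$ (waiting), $d_1=\dots=d_n=d_0\ge0$ (idleness), overtime $C\ge0$. Bounds $0\le u^L_i<u^U_i<\infty$; integer $K\in[n]$. $\Lambda=\{\boldsymbol\lambda\in\{0,1\}^n:\sum_i(1-\lambda_i)\le K\}$, $\Xi=\{(\boldsymbol\mu,\boldsymbol\lambda)\in\mathbb R^n\times\Lambda:u^L_i\lambda_i\le\mu_i\le u^U_i\lambda_i\ \forall i\}$; data $\widehat{\boldsymbol\xi}^j=(\widehat{\boldsymbol\mu}^j,\widehat{\boldsymbol\lambda}^j)\in\Xi$. For $\boldsymbol\xi=(\boldsymbol\mu,\boldsymbol\lambda)\in\Xi$, $g(\mathbf s,\boldsymbol\xi)$ is the optimal value of $\min_{\mathbf w\in\mathbb R^{n+1},\mathbf v\in\mathbb R^n}\sum_{i=1}^n(c_i\lambda_iw_i+d_iv_i)+Cw_{n+1}$ s.t. $w_i-v_{i-1}=\mu_{i-1}+w_{i-1}-s_{i-1}$ ($i=2,\dots,n+1$), $\mathbf w\ge0,w_1=0,\mathbf v\ge0$. For $\boldsymbol\lambda\in\Lambda$, $\mathcal Y(\boldsymbol\lambda)=\{\mathbf y\in\mathbb R^n:-y_i\le d_i\ \forall i;\ y_{i-1}-y_i\le c_i\lambda_i\ (i=2,\dots,n);\ y_n\le C\}$. $\|\cdot\|_p$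 is the $p$-norm on $\mathbb R^{2n}$. *)

From HB Require Import structures.
From mathcomp Require Import all_boot all_order all_algebra.
From mathcomp Require Import boolp classical_sets reals exp.
Set Implicit Arguments. Unset Strict Implicit. Unset Printing Implicit Defensive.
Import Order.TTheory GRing.Theory Num.Theory.
Local Open Scope ring_scope.
Local Open Scope classical_set_scope.

(* Indices: the paper's index i in [n] is the ordinal k : 'I_n with val k = i-1.
   For w in R^{n+1}, the paper's w_i is w (k : 'I_n.+1) with val k = i-1. *)

Section Defs.
Variable R : realType.

Definition pnorm (m : nat) (p : R) (x : 'I_m -> R) : R :=
  (\sum_(k < m) `|x k| `^ p) `^ p^-1.

Definition xi_vec (n : nat) (mu lam : 'I_n -> R) : 'I_(n + n) -> R :=
  fun k => match split k with inl i => mu i | inr i => lam i end.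

Definition in_Lambda (n K : nat) (lam : 'I_n -> R) : Prop :=
  (forall i, lam i = 0 \/ lam i = 1) /\ \sum_(i < n) (1 - lam i) <= K%:R.

Definition in_Xi (n K : nat) (uL uU : 'I_n -> R) (mu lam : 'I_n -> R) : Prop :=
  in_Lambda K lam /\ (forall i, uL i * lam i <= mu i <= uU i * lam i).

Definition in_S (n : nat) (T : R) (s : 'I_n -> R) : Prop :=
  (forall i, 0 <= s i) /\ \sum_(i < n) s i <= T.

Definition lp_feasible (n : nat) (s mu : 'I_n -> R)
    (w : 'I_n.+1 -> R) (v : 'I_n -> R) : Prop :=
  (forall k, 0 <= w k) /\ w ord0 = 0 /\ (forall k, 0 <= v k) /\
  (forall k : 'I_n, w (lift ord0 k) - v k = mu k + w (widen_ord (leqnSn n) k) - s k).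

(* objective with homogeneous costs c_i = 1, d_i = d0, overtime C *)
Definition lp_obj (n : nat) (d0 C : R) (lam : 'I_n -> R)
    (w : 'I_n.+1 -> R) (v : 'I_n -> R) : R :=
  \sum_(k < n) (1 * lam k * w (widen_ord (leqnSn n) k) + d0 * v k) + C * w ord_max.

Definition g (n : nat) (d0 C : R) (s mu lam : 'I_n -> R) : R :=
  inf [set z | exists w v, lp_feasible s mu w v /\ z = lp_obj d0 C lam w v].

Definition omega' (n K : nat) (d0 C p rho : R) (uL uU : 'I_n -> R)
    (muh lamh : 'I_n -> R) (s : 'I_n -> R) : R :=
  sup [set z | exists mu lam, in_Xi K uL uU mu lam /\
        z = g d0 C s mu lam
            - rho * (pnorm p (fun k => xi_vec mu lam k - xi_vec muh lamh k)) `^ p].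

Definition in_Y (n : nat) (d0 C : R) (lam y : 'I_n -> R) : Prop :=
  (forall i, - y i <= d0) /\
  (forall i i' : 'I_n, val i' = (val i).+1 -> y i - y i' <= 1 * lam i') /\
  (forall i : 'I_n, val i = n.-1 -> y i <= C).

Definition f_ij (p rho uLi uUi si muhi lamhi lami yi : R) : R :=
  sup [set z | exists mui, uLi * lami <= mui <= uUi * lami /\
        z = yi * (mui - si) - rho * `|mui - muhi| `^ p - rho * `|lami - lamhi| `^ p].

Definition restricted (n : nat) (d0 C : R) (lam y : 'I_n -> R) : Prop :=
  (forall i : 'I_n, val i = n.-1 -> y i = C \/ y i = - d0) /\
  (forall i i' : 'I_n, val i' = (val i).+1 -> y i = - d0 \/ y i = y i' + lam i') /\
  (forall i : 'I_n, exists m : nat, (m <= n - (val i).+1)%N /\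
        (y i = - d0 + m%:R \/ y i = C + m%:R)).

End Defs.

From HB Require Import structures.
From mathcomp Require Import all_boot all_order all_algebra.
From mathcomp Require Import boolp classical_sets reals exp.
From mathcomp Require Import ring lra.
Set Implicit Arguments. Unset Strict Implicit. Unset Printing Implicit Defensive.
Import Order.TTheory GRing.Theory Num.Theory.
Local Open Scope ring_scope.
Local Open Scope classical_set_scope.

(* For fixed xi, g(s, xi) is the value of a linear program whose dual is
   max { sum_i y_i (mu_i - s_i) | y in Y(lambda) }.  Strong duality holds
   constructively: the Lindley recursion w_{i+1} = (w_i + mu_i - s_i)^+ is
   primal feasible, and reading complementary slackness backwards from y_n
   yields a dual point of Y(lambda) with the same value (summation by parts).
   That dual point satisfies the restrictions y_n in {C, -d0},
   y_i in {-d0, y_{i+1} + lambda_{i+1}}, hence lies in the finite sets Y_i.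
   Substituting the dual into omega'_j, and splitting ||xi - xi^j||_p^p
   coordinatewise, the objective becomes
   sum_i [y_i (mu_i - s_i) - rho |mu_i - mu^j_i|^p - rho |lambda_i - lambda^j_i|^p],
   in which the mu_i decouple for fixed (lambda, y): the inner suprema are
   the f_ij. *)
Section Suprema.
Variable R : realType.

Lemma sup_eq_cofinal (A B : set R) : has_sup A ->
  (forall a, A a -> exists2 b, B b & a <= b) ->
  (forall b, B b -> forall e, 0 < e -> exists2 a, A a & b - e <= a) ->
  sup A = sup B.
Proof.
move=> supA le_AB le_BA.
have B0 : B !=set0 by have [a /le_AB[b Bb _]] := supA.1; exists b.
have ubB : ubound B (sup A).
  move=> b Bb; apply/ler_addgt0Pr => e e_gt0.
  have [a Aa le_ba] := le_BA b Bb e e_gt0.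
  have := sup_upper_bound supA Aa; lra.
apply/eqP; rewrite eq_le (ge_sup B0 ubB) andbT.
apply: sup_le; [|by case: supA|by split=> //; exists (sup A)].
by move=> a /le_AB[b Bb le_ab]; apply/downP; exists b.
Qed.

End Suprema.

Section NatExtension.
Variable R : realType.

Definition nat_ext (m : nat) (x0 : R) (x : 'I_m.+1 -> R) (k : nat) : R :=
  if (k < m.+1)%N then x (inord k) else x0.

Lemma nat_extE m x0 x (i : 'I_m.+1) : nat_ext x0 x i = x i.
Proof. by rewrite /nat_ext ltn_ord inord_val. Qed.

Lemma nat_ext_out m x0 x k : (m < k)%N -> @nat_ext m x0 x k = x0.
Proof. by move=> m_lt; rewrite /nat_ext ltnNge m_lt. Qed.

End NatExtension.

Section WeakDuality.
Variable R : realType.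

Lemma primal_sub_dual_telescope (n : nat) (d : R) (W V Y L : nat -> R) :
  W 0%N = 0 ->
  \sum_(k < n) (L k * W k + d * V k) - \sum_(k < n) Y k * (W k.+1 - V k - W k)
  = \sum_(k < n) ((d + Y k) * V k + (L k.+1 + Y k.+1 - Y k) * W k.+1)
    - (L n + Y n) * W n.
Proof.
move=> W0; elim: n => [|n IH]; first by rewrite !big_ord0 W0; ring.
rewrite !big_ord_recr /=; move: IH; lra.
Qed.

Lemma lp_obj_ge_dual n d0 C (s mu lam : 'I_n.+1 -> R) w v y :
  lp_feasible s mu w v -> in_Y d0 C lam y ->
  \sum_(i < n.+1) y i * (mu i - s i) <= lp_obj d0 C lam w v.
Proof.
move=> [w_ge0 [w0 [v_ge0 flow]]] [y_ge [y_step y_last]].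
(* Padding y with y_{n+1} = C and lambda with lambda_{n+1} = 0 turns the
   overtime constraint y_n <= C into one more step constraint. *)
pose W := nat_ext 0 w; pose V := nat_ext 0 v.
pose Y := nat_ext C y; pose L := nat_ext 0 lam.
have W0 : W 0%N = 0 by rewrite -w0 -(nat_extE 0 w ord0).
have Wl (k : 'I_n.+1) : w (lift ord0 k) = W k.+1 by rewrite /W -(lift0 k) nat_extE.
have Ww (k : 'I_n.+1) : w (widen_ord (leqnSn n.+1) k) = W k.
  by rewrite /W -(nat_extE 0 w (widen_ord _ k)).
have obj : lp_obj d0 C lam w v
    = \sum_(k < n.+1) (L k * W k + d0 * V k) + C * W n.+1.
  rewrite /lp_obj -(nat_extE 0 w ord_max); congr (_ + _).
  by apply: eq_bigr => k _; rewrite Ww /L /V !nat_extE mul1r.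
have dual : \sum_(i < n.+1) y i * (mu i - s i)
    = \sum_(k < n.+1) Y k * (W k.+1 - V k - W k).
  apply: eq_bigr => k _; rewrite /Y /V !nat_extE -Wl -Ww.
  by congr (_ * _); have := flow k; lra.
have slack : 0 <= \sum_(k < n.+1)
    ((d0 + Y k) * V k + (L k.+1 + Y k.+1 - Y k) * W k.+1).
  apply: sumr_ge0 => k _; apply: addr_ge0; apply: mulr_ge0.
  - by rewrite /Y nat_extE; have := y_ge k; lra.
  - by rewrite /V nat_extE.
  - case: (ltnP k.+1 n.+1) => [k_lt|k_ge].
      have := y_step k (inord k.+1) (inordK k_lt).
      by rewrite /L /Y /nat_ext k_lt ltn_ord inord_val mul1r; lra.
    have k_n : val k = n by apply/anti_leq; rewrite -ltnS ltn_ord.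
    have k_gt : (n < k.+1)%N by rewrite k_n.
    rewrite /L /Y !(nat_ext_out _ _ k_gt) nat_extE; have := y_last k k_n; lra.
  - by rewrite -Wl.
have := primal_sub_dual_telescope n.+1 d0 V Y L W0.
rewrite /L /Y !(nat_ext_out _ _ (ltnSn n)) obj dual; lra.
Qed.

End WeakDuality.

Section GreedySolution.
Variable R : realType.
Variables (n : nat) (d0 C : R) (s mu lam : 'I_n.+1 -> R).
Hypotheses (d0_ge0 : 0 <= d0) (C_ge0 : 0 <= C).
Hypothesis lam01 : forall i, lam i = 0 \/ lam i = 1.

Local Notation L := (nat_ext 0 lam).

Definition excess (k : nat) : R := nat_ext 0 mu k - nat_ext 0 s k.

Fixpoint greedy_wait (k : nat) : R :=
  if k is k'.+1 then Num.max 0 (excess k' + greedy_wait k') else 0.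

Definition greedy_idle (k : nat) : R := Num.max 0 (- (excess k + greedy_wait k)).

Fixpoint dual_from_end (t : nat) : R :=
  if t is t'.+1 then
    if 0 < greedy_wait (n.+1 - t') then dual_from_end t' + L (n.+1 - t') else - d0
  else C.

Definition greedy_dual (k : nat) : R := dual_from_end (n.+1 - k).

Lemma greedy_wait_ge0 k : 0 <= greedy_wait k.
Proof. by case: k => [|k] /=; rewrite ?le_max lexx. Qed.

Lemma greedy_idle_ge0 k : 0 <= greedy_idle k.
Proof. by rewrite /greedy_idle le_max lexx. Qed.

Lemma greedy_flow k : greedy_wait k.+1 - greedy_idle k - greedy_wait k = excess k.
Proof.
rewrite /= /greedy_idle; set a := excess k + greedy_wait k.
suff : Num.max 0 a - Num.max 0 (- a) = a by rewrite /a; lra.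
by case: (lerP 0 a) => a0; [rewrite max_l | rewrite max_r]; lra.
Qed.

Lemma greedy_dual_last : greedy_dual n.+1 = C.
Proof. by rewrite /greedy_dual subnn. Qed.

Lemma greedy_dualS k : (k < n.+1)%N ->
  greedy_dual k = if 0 < greedy_wait k.+1 then greedy_dual k.+1 + L k.+1 else - d0.
Proof. by move=> k_lt; rewrite /greedy_dual -(subnSK k_lt) /= subKn. Qed.

Lemma greedy_complementary_slackness k : (k < n.+1)%N ->
  (d0 + greedy_dual k) * greedy_idle k
  + (L k.+1 + greedy_dual k.+1 - greedy_dual k) * greedy_wait k.+1 = 0.
Proof.
move=> k_lt; rewrite (greedy_dualS k_lt); case: ifP => [w_pos|w_npos].
  have a_pos : 0 < excess k + greedy_wait k by move: w_pos; rewrite /= lt_max ltxx.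
  rewrite /greedy_idle max_l ?oppr_le0 ?ltW //; ring.
have -> : greedy_wait k.+1 = 0.
  by apply/eqP; rewrite eq_le greedy_wait_ge0 andbT leNgt w_npos.
ring.
Qed.

Lemma nat_ext_lam01 k : L k = 0 \/ L k = 1.
Proof. by rewrite /nat_ext; case: ifP => _; [exact: lam01 | left]. Qed.

Lemma dual_from_end_ge t : - d0 <= dual_from_end t.
Proof.
elim: t => [|t IH] /=; first by move: d0_ge0 C_ge0; lra.
case: ifP => _; last lra.
by case: (nat_ext_lam01 (n.+1 - t)) => ->; lra.
Qed.

Lemma dual_from_end_form t : exists2 m : nat, (m <= t.-1)%N &
  dual_from_end t = - d0 + m%:R \/ dual_from_end t = C + m%:R.
Proof.
elim: t => [|t [m m_le IH]] /=; first by exists 0%N => //; right; rewrite addr0.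
case: ifP => _; last by exists 0%N => //; left; rewrite addr0.
case: t m_le IH => [|t] m_le IH.
  by rewrite subn0 nat_ext_out // addr0; exists m.
case: (nat_ext_lam01 (n.+1 - t.+1)) => ->; first by exists m; rewrite ?addr0 // leqW.
exists m.+1 => //.
by rewrite -natr1; case: IH => ->; [left | right]; ring.
Qed.

Definition greedy_w : 'I_n.+2 -> R := fun k => greedy_wait k.
Definition greedy_v : 'I_n.+1 -> R := fun k => greedy_idle k.
Definition greedy_y : 'I_n.+1 -> R := fun k => greedy_dual k.

Lemma greedy_feasible : lp_feasible s mu greedy_w greedy_v.
Proof.
split; first by move=> k; exact: greedy_wait_ge0.
split=> //; split; first by move=> k; exact: greedy_idle_ge0.
move=> k; move: (greedy_flow k).
by rewrite /greedy_w /greedy_v lift0 /= /excess !nat_extE; lra.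
Qed.

Lemma greedy_y_in_Y : in_Y d0 C lam greedy_y.
Proof.
split.
  by move=> i; have := dual_from_end_ge (n.+1 - i); rewrite /greedy_y /greedy_dual; lra.
split.
  move=> i i' i'_succ; rewrite /greedy_y mul1r (greedy_dualS (ltn_ord i)) -i'_succ nat_extE.
  case: ifP => _; first lra.
  have := dual_from_end_ge (n.+1 - i'); rewrite -/(greedy_dual i').
  by case: (lam01 i') => ->; lra.
move=> i i_last; rewrite /greedy_y (greedy_dualS (ltn_ord i)) i_last greedy_dual_last.
by rewrite nat_ext_out //; case: ifP => _; move: d0_ge0 C_ge0; lra.
Qed.

Lemma greedy_y_restricted : restricted d0 C lam greedy_y.
Proof.
split.
  move=> i i_last; rewrite /greedy_y (greedy_dualS (ltn_ord i)) i_last greedy_dual_last.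
  by rewrite nat_ext_out //; case: ifP => _; [left; rewrite addr0 | right].
split.
  move=> i i' i'_succ; rewrite /greedy_y (greedy_dualS (ltn_ord i)) -i'_succ nat_extE.
  by case: ifP => _; [right | left].
move=> i; have [m m_le form] := dual_from_end_form (n.+1 - i).
by exists m; rewrite subnS.
Qed.

Lemma lp_obj_greedy :
  lp_obj d0 C lam greedy_w greedy_v = \sum_(i < n.+1) greedy_y i * (mu i - s i).
Proof.
have slack : \sum_(k < n.+1) ((d0 + greedy_dual k) * greedy_idle k
    + (L k.+1 + greedy_dual k.+1 - greedy_dual k) * greedy_wait k.+1) = 0.
  by apply: big1 => k _; exact: greedy_complementary_slackness (ltn_ord k).
have := primal_sub_dual_telescope n.+1 d0 greedy_idle greedy_dual L (erefl : greedy_wait 0 = 0).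
rewrite nat_ext_out // greedy_dual_last add0r slack.
have -> : \sum_(k < n.+1) greedy_dual k * (greedy_wait k.+1 - greedy_idle k - greedy_wait k)
    = \sum_(i < n.+1) greedy_y i * (mu i - s i).
  by apply: eq_bigr => k _; rewrite greedy_flow /excess !nat_extE.
rewrite /lp_obj.
have -> : \sum_(k < n.+1) (1 * lam k * greedy_w (widen_ord (leqnSn n.+1) k) + d0 * greedy_v k)
    = \sum_(k < n.+1) (L k * greedy_wait k + d0 * greedy_idle k).
  by apply: eq_bigr => k _; rewrite nat_extE mul1r.
rewrite /greedy_w /=; lra.
Qed.

Lemma g_ge_dual y : in_Y d0 C lam y ->
  \sum_(i < n.+1) y i * (mu i - s i) <= g d0 C s mu lam.
Proof.
move=> y_in; apply: lb_le_inf; first by exists (lp_obj d0 C lam greedy_w greedy_v),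
  greedy_w, greedy_v; split => //; exact: greedy_feasible.
by move=> z [w [v [feas ->]]]; exact: lp_obj_ge_dual.
Qed.

Lemma g_eq_greedy_dual : g d0 C s mu lam = \sum_(i < n.+1) greedy_y i * (mu i - s i).
Proof.
apply/eqP; rewrite eq_le g_ge_dual ?andbT; last exact: greedy_y_in_Y.
rewrite -lp_obj_greedy; apply: ge_inf; last first.
  by exists greedy_w, greedy_v; split => //; exact: greedy_feasible.
exists (\sum_(i < n.+1) greedy_y i * (mu i - s i)) => z [w [v [feas ->]]].
by apply: lp_obj_ge_dual => //; exact: greedy_y_in_Y.
Qed.

End GreedySolution.

Section CostDecomposition.
Variable R : realType.

Lemma pnorm_powR m (p : R) (x : 'I_m -> R) : p != 0 ->
  pnorm p x `^ p = \sum_(k < m) `|x k| `^ p.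
Proof.
move=> p_neq0; rewrite /pnorm -powRrM mulVf // powRr1 //.
by apply: sumr_ge0 => k _; exact: powR_ge0.
Qed.

Lemma pnorm_xi_vec_powR n (p : R) (mu lam muh lamh : 'I_n -> R) : p != 0 ->
  pnorm p (fun k => xi_vec mu lam k - xi_vec muh lamh k) `^ p
  = \sum_(i < n) `|mu i - muh i| `^ p + \sum_(i < n) `|lam i - lamh i| `^ p.
Proof.
move=> p_neq0; rewrite pnorm_powR // big_split_ord.
congr (_ + _); apply: eq_bigr => i _.
  by rewrite /xi_vec -[lshift n i]/(unsplit (inl i)) unsplitK.
by rewrite /xi_vec -[rshift n i]/(unsplit (inr i)) unsplitK.
Qed.

Definition f_ij_obj (p rho si muhi lamhi lami yi mui : R) : R :=
  yi * (mui - si) - rho * `|mui - muhi| `^ p - rho * `|lami - lamhi| `^ p.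

Lemma sum_f_ij_obj n (p rho : R) (y s mu lam muh lamh : 'I_n -> R) : p != 0 ->
  \sum_(i < n) f_ij_obj p rho (s i) (muh i) (lamh i) (lam i) (y i) (mu i)
  = \sum_(i < n) y i * (mu i - s i)
    - rho * pnorm p (fun k => xi_vec mu lam k - xi_vec muh lamh k) `^ p.
Proof.
move=> p_neq0; rewrite pnorm_xi_vec_powR // /f_ij_obj !sumrB mulrDr !mulr_sumr; ring.
Qed.

Section OneAppointment.
Variables (p rho uLi uUi si muhi lamhi lami yi : R).
Hypotheses (rho_ge0 : 0 <= rho) (interval_ne : uLi * lami <= uUi * lami).

Local Notation obj := (f_ij_obj p rho si muhi lamhi lami yi).

Lemma f_ij_has_sup :
  has_sup [set z | exists mui, uLi * lami <= mui <= uUi * lami /\ z = obj mui].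
Proof.
split; first by exists (obj (uLi * lami)), (uLi * lami); rewrite lexx interval_ne.
exists (`|yi| * (`|uLi * lami| + `|uUi * lami| + `|si|)) => _ [mui [/andP[lo hi] ->]].
have rho_terms : 0 <= rho * `|mui - muhi| `^ p + rho * `|lami - lamhi| `^ p.
  by apply: addr_ge0; apply: mulr_ge0 => //; exact: powR_ge0.
suff : yi * (mui - si) <= `|yi| * (`|uLi * lami| + `|uUi * lami| + `|si|).
  by rewrite /f_ij_obj; lra.
apply: le_trans (ler_norm _) _; rewrite normrM ler_wpM2l //.
apply: le_trans (ler_normB _ _) _; rewrite lerD2r ler_norml.
have := ler_norm (uUi * lami); have := ler_norm (- (uLi * lami)); rewrite normrN.
by have := normr_ge0 (uLi * lami); have := normr_ge0 (uUi * lami); lra.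
Qed.

Lemma f_ij_ge mui : uLi * lami <= mui <= uUi * lami ->
  obj mui <= f_ij p rho uLi uUi si muhi lamhi lami yi.
Proof. by move=> mui_in; apply: (sup_upper_bound f_ij_has_sup); exists mui. Qed.

Lemma f_ij_adherent e : 0 < e -> exists mui,
  uLi * lami <= mui <= uUi * lami /\ f_ij p rho uLi uUi si muhi lamhi lami yi - e <= obj mui.
Proof.
move=> e_gt0; have [_ [mui [mui_in ->]] lt_obj] := sup_adherent e_gt0 f_ij_has_sup.
by exists mui; split => //; exact: ltW.
Qed.

End OneAppointment.
End CostDecomposition.

Lemma in_Xi_mu_bounds (R : realType) n K (uL uU mu lam : 'I_n -> R) :
  (forall i, 0 <= uL i) -> (forall i, uL i <= uU i) ->
  in_Xi K uL uU mu lam -> forall i, 0 <= mu i <= uU i.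
Proof.
move=> uL_ge0 uL_le_uU [[lam01 _] mu_in] i; have /andP[lo hi] := mu_in i.
have := uL_ge0 i; have := uL_le_uU i.
by case: (lam01 i) lo hi => ->; rewrite ?mulr0 ?mulr1; lra.
Qed.

Lemma restricted_norm_le (R : realType) n (d0 C : R) (lam y : 'I_n -> R) :
  0 <= d0 -> 0 <= C -> restricted d0 C lam y -> forall i, `|y i| <= d0 + C + n%:R.
Proof.
move=> d0_ge0 C_ge0 [_ [_ y_form]] i; have [m [m_le y_eq]] := y_form i.
have m_n : (m%:R : R) <= n%:R by rewrite ler_nat (leq_trans m_le) ?leq_subr.
have m_ge0 : (0 : R) <= m%:R by [].
by rewrite ler_norml; case: y_eq => ->; lra.
Qed.

Section Reformulation.
Variable R : realType.
Variables (n K : nat) (d0 C p rho : R) (uL uU muh lamh s : 'I_n.+1 -> R).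
Hypotheses (d0_ge0 : 0 <= d0) (C_ge0 : 0 <= C) (p_neq0 : p != 0) (rho_ge0 : 0 <= rho).
Hypotheses (uL_ge0 : forall i, 0 <= uL i) (uL_le_uU : forall i, uL i <= uU i).
Hypothesis s_ge0 : forall i, 0 <= s i.

Local Notation primal mu lam := (g d0 C s mu lam
  - rho * pnorm p (fun k => xi_vec mu lam k - xi_vec muh lamh k) `^ p).
Local Notation dual lam y :=
  (\sum_(i < n.+1) f_ij p rho (uL i) (uU i) (s i) (muh i) (lamh i) (lam i) (y i)).

Lemma scaled_bounds_le lam i : lam i = 0 \/ lam i = 1 -> uL i * lam i <= uU i * lam i.
Proof. by case=> ->; rewrite ?mulr0 ?mulr1 // uL_le_uU. Qed.

Lemma primal_le_restricted_dual mu lam : in_Xi K uL uU mu lam ->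
  exists2 y, in_Y d0 C lam y /\ restricted d0 C lam y & primal mu lam <= dual lam y.
Proof.
move=> [[lam01 _] mu_in]; exists (greedy_y d0 C s mu lam).
  by split; [exact: greedy_y_in_Y | exact: greedy_y_restricted].
rewrite g_eq_greedy_dual // -sum_f_ij_obj //.
by apply: ler_sum => i _; apply: f_ij_ge => //; exact: scaled_bounds_le.
Qed.

Lemma dual_le_primal lam y e : in_Lambda K lam -> in_Y d0 C lam y -> 0 < e ->
  exists2 mu, in_Xi K uL uU mu lam & dual lam y - e <= primal mu lam.
Proof.
move=> lamL y_in e_gt0; have e'_gt0 : 0 < e / n.+1%:R by rewrite divr_gt0.
have /choice[mu mu_adh] := fun i =>
  f_ij_adherent p (s i) (muh i) (lamh i) (y i) rho_ge0 (scaled_bounds_le (lamL.1 i)) e'_gt0.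
exists mu; first by split => // i; case: (mu_adh i).
have e_split : e / n.+1%:R *+ n.+1 = e by rewrite -[_ *+ n.+1]mulr_natr divfK ?pnatr_eq0.
have := ler_sum (index_enum _) (fun i (_ : true) => (mu_adh i).2).
rewrite sumrB sumr_const card_ord e_split sum_f_ij_obj //.
by have := g_ge_dual s mu y_in; lra.
Qed.

Lemma primal_has_sup :
  has_sup [set z | exists mu lam, in_Xi K uL uU mu lam /\ z = primal mu lam].
Proof.
split.
  exists (primal uL (fun=> 1)), uL, (fun=> 1); split=> //; split.
    by split=> [i|]; [right | rewrite big1 ?ler0n // => i _; rewrite subrr].
  by move=> i; rewrite !mulr1 lexx uL_le_uU.
exists (\sum_(i < n.+1) (d0 + C + n.+1%:R) * (uU i + s i)) => _ [mu [lam [mu_in ->]]].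
have lam01 := mu_in.1.1.
have penalty_ge0 : 0 <= rho * pnorm p (fun k => xi_vec mu lam k - xi_vec muh lamh k) `^ p.
  by apply: mulr_ge0 => //; exact: powR_ge0.
suff : g d0 C s mu lam <= \sum_(i < n.+1) (d0 + C + n.+1%:R) * (uU i + s i) by lra.
rewrite g_eq_greedy_dual //; apply: ler_sum => i _.
have y_le := restricted_norm_le d0_ge0 C_ge0 (greedy_y_restricted d0 C s mu lam01) i.
have /andP[mu_ge0 mu_le] := in_Xi_mu_bounds uL_ge0 uL_le_uU mu_in i.
apply: le_trans (ler_norm _) _; rewrite normrM ler_pM //.
by rewrite ler_norml; have := s_ge0 i; lra.
Qed.

Lemma sup_primal_eq_sup_dual :
  sup [set z | exists mu lam, in_Xi K uL uU mu lam /\ z = primal mu lam]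
  = sup [set z | exists lam y, in_Lambda K lam /\ in_Y d0 C lam y /\ z = dual lam y]
  /\
  sup [set z | exists mu lam, in_Xi K uL uU mu lam /\ z = primal mu lam]
  = sup [set z | exists lam y, in_Lambda K lam /\ in_Y d0 C lam y /\
                  restricted d0 C lam y /\ z = dual lam y].
Proof.
split; apply: sup_eq_cofinal primal_has_sup _ _.
- move=> _ [mu [lam [mu_in ->]]].
  have [y [y_in _] le_dual] := primal_le_restricted_dual mu_in.
  by exists (dual lam y) => //; exists lam, y; split => //; exact: mu_in.1.
- move=> _ [lam [y [lamL [y_in ->]]]] e e_gt0.
  have [mu mu_in le_primal] := dual_le_primal lamL y_in e_gt0.
  by exists (primal mu lam) => //; exists mu, lam.
- move=> _ [mu [lam [mu_in ->]]].
  have [y [y_in y_res] le_dual] := primal_le_restricted_dual mu_in.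
  by exists (dual lam y) => //; exists lam, y; split => //; exact: mu_in.1.
- move=> _ [lam [y [lamL [y_in [_ ->]]]]] e e_gt0.
  have [mu mu_in le_primal] := dual_le_primal lamL y_in e_gt0.
  by exists (primal mu lam) => //; exists mu, lam.
Qed.

End Reformulation.


Theorem proposition4 (R : realType) (n N K : nat) (T d0 C : R)
    (uL uU : 'I_n -> R) (muh lamh : 'I_N -> 'I_n -> R)
    (p rho : R) (j : 'I_N) (s : 'I_n -> R) :
  (0 < n)%N -> (0 < N)%N -> 0 < T -> 0 <= d0 -> 0 <= C ->
  (forall i, 0 <= uL i /\ uL i < uU i) ->
  (1 <= K <= n)%N ->
  (forall j', in_Xi K uL uU (muh j') (lamh j')) ->
  1 <= p -> 0 <= rho -> in_S T s ->
  omega' K d0 C p rho uL uU (muh j) (lamh j) s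
    = sup [set z | exists lam y, in_Lambda K lam /\ in_Y d0 C lam y /\
             z = \sum_(i < n) f_ij p rho (uL i) (uU i) (s i) (muh j i) (lamh j i) (lam i) (y i)]
  /\
  omega' K d0 C p rho uL uU (muh j) (lamh j) s
    = sup [set z | exists lam y, in_Lambda K lam /\ in_Y d0 C lam y /\
             restricted d0 C lam y /\
             z = \sum_(i < n) f_ij p rho (uL i) (uU i) (s i) (muh j i) (lamh j i) (lam i) (y i)].
Proof.
move=> n_gt0 _ _ d0_ge0 C_ge0 uLU _ _ p_ge1 rho_ge0 [s_ge0 _].
case: n n_gt0 uL uU muh lamh s uLU s_ge0 => // n _ uL uU muh lamh s uLU s_ge0.
have p_neq0 : p != 0 by rewrite gt_eqF // (lt_le_trans ltr01 p_ge1).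
exact (sup_primal_eq_sup_dual K (muh j) (lamh j) d0_ge0 C_ge0 p_neq0 rho_ge0
  (fun i => (uLU i).1) (fun i => ltW (uLU i).2) s_ge0).
Qed.
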